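(* For every hypothesis class $\mathcal H$ with VC dimension $d\in\mathbb N\cup\{\infty\}$, $N^{np}_{\mathcal H}(n)=\tilde\Omega(\min(d,n))$.
   Context: Let $\mathcal X$ be a domain, $\mathcal Z=\mathcal X\times\{\pm1\}$, $\mathcal Z^*$ the set of samples (finite sequences of examples). Alice holds sample $S_a$, Bob holds $S_b$, joint sample $S=(S_a,S_b)$ of size $n$. $S$ is realizable by $\mathcal H\subseteq\{\pm1\}^{\mathcal X}$ if some $h\in\mathcal H$ agrees with all its examples. The non-deterministic sample complexity satisfies $N^{np}_{\mathcal H}(n)\le T(n)$ if there are predicates $A,B:\mathcal Z^*\times\mathcal Z^*\to\{\mathsf{True},\mathsf{False}\}$ such that for every realizable $S=(S_a,S_b)$ of size $n$ there is a proof $P$, a sequence of $T(n)$ examples each appearing in $S$, with $A(S_a,P)=B(S_b,P)=\mathsf{True}$, and for every non-realizable $S$ of size $n$ and every $P\in\mathcal Z^{T(n)}$, $A(S_a,P)=\mathsf{False}$ or $B(S_b,P)=\mathsf{False}$; $N^{np}_{\mathcal H}(n)$ is the least such $T(n)$. $\tilde\Omega$ hides logarithmic factors. *)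

From Stdlib Require Import Reals List Arith.
Import ListNotations.
Set Implicit Arguments.

(** Examples: pairs (x, y) with label y : bool (true = +1, false = -1). *)
Definition example (X : Type) : Type := (X * bool)%type.
Definition sample (X : Type) : Type := list (example X).

Definition hclass (X : Type) : Type := (X -> bool) -> Prop.

Definition consistent X (h : X -> bool) (S : sample X) : Prop :=
  forall z, In z S -> h (fst z) = snd z.

Definition realizable X (H : hclass X) (S : sample X) : Prop :=
  exists h, H h /\ consistent h S.

Definition shatters X (H : hclass X) (xs : list X) : Prop :=
  NoDup xs /\
  forall f : X -> bool, exists h, H h /\ forall x, In x xs -> h x = f x.

(** VC dimension, valued in N ∪ {∞}: [Some d] is d, [None] is ∞. *)
Definition VCdim X (H : hclass X) (d : option nat) : Prop :=
  match d with
  | Some d => (exists xs, shatters H xs /\ length xs = d) /\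
              (forall xs, shatters H xs -> length xs <= d)
  | None => forall m, exists xs, shatters H xs /\ length xs = m
  end.

Definition min_ext (d : option nat) (n : nat) : nat :=
  match d with Some d => Nat.min d n | None => n end.

(** [np_upper H n T] : N^np_H(n) <= T, i.e. there are predicates A, B
    such that every realizable joint sample (S_a, S_b) of size n has a
    proof P of T examples, each appearing in S, accepted by both, and for
    every non-realizable one, every P of length T is rejected by one party. *)
Definition np_upper X (H : hclass X) (n T : nat) : Prop :=
  exists (A B : sample X -> sample X -> bool),
    forall Sa Sb : sample X, length Sa + length Sb = n ->
      (realizable H (Sa ++ Sb) ->
         exists P : sample X, length P = T /\
           (forall z, In z P -> In z (Sa ++ Sb)) /\
           A Sa P = true /\ B Sb P = true) /\
      (~ realizable H (Sa ++ Sb) ->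
         forall P : sample X, length P = T ->
           A Sa P = false \/ B Sb P = false).

From Stdlib Require Import Reals List Lia Lra Classical ClassicalEpsilon.
Import ListNotations.
Set Implicit Arguments.

(* A fooling-set argument.  Let x_1, ..., x_m be shattered, with 2m <= n.  For
   each labeling b of the x_i, give both Alice and Bob the labeled points
   (x_i, b_i), Alice's copy padded to n - m examples.  The input (b, b) is
   realizable while (b, b') is not for b <> b'.  So a proof accepted on (b, b)
   and on (b', b') would make Alice accept on b and Bob on b', i.e. accept the
   non-realizable (b, b'); the proofs of the 2^m diagonal inputs are therefore
   distinct words of length T over the 2m possible examples, whence
   2^m <= (2m)^T and m ln 2 <= T ln n.  Taking m = min(d, n/2) gives
   min(d, n) / 6 <= T ln n. *)

Fixpoint words A (L : list A) (t : nat) : list (list A) :=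
  match t with
  | 0 => [[]]
  | S t => flat_map (fun x => map (cons x) (words L t)) L
  end.

Lemma length_words A (L : list A) t : length (words L t) = length L ^ t.
Proof.
  induction t as [|t IH]; simpl; [reflexivity|].
  rewrite <- IH; generalize (words L t) as W; intros W; clear IH.
  induction L as [|x L IHL]; simpl; [reflexivity|].
  now rewrite length_app, length_map, IHL.
Qed.

Lemma in_words_iff A (L : list A) t w :
  In w (words L t) <-> length w = t /\ incl w L.
Proof.
  revert w; induction t as [|t IH]; intros w; simpl.
  - split; [intros [<-|[]]; split; [reflexivity|apply incl_nil_l]|].
    intros [Hw _]; left; symmetry; now apply length_zero_iff_nil.
  - rewrite in_flat_map; split.
    + intros [x [Hx Hw]]; apply in_map_iff in Hw as [w' [<- Hw']].
      apply IH in Hw' as [Hlen Hincl]; simpl; split; [now f_equal|].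
      now apply incl_cons.
    + intros [Hlen Hincl]; destruct w as [|x w]; [discriminate|].
      apply incl_cons_inv in Hincl as [Hx Hincl].
      exists x; split; [exact Hx|]; apply in_map, IH; split; [now injection Hlen|exact Hincl].
Qed.

Lemma NoDup_flat_map_cons A (L : list A) (W : list (list A)) :
  NoDup L -> NoDup W -> NoDup (flat_map (fun x => map (cons x) W) L).
Proof.
  intros HL HW; induction HL as [|x L HxL HL IHL]; simpl; [constructor|].
  apply NoDup_app; [|exact IHL|].
  - apply NoDup_map_NoDup_ForallPairs; [|exact HW].
    now intros w w' _ _ [= ->].
  - intros w Hw Hw'; apply in_map_iff in Hw as [u [<- _]].
    apply in_flat_map in Hw' as [y [Hy Hw']]; apply in_map_iff in Hw' as [u' [[= ->] _]].
    contradiction.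
Qed.

Lemma NoDup_words A (L : list A) t : NoDup L -> NoDup (words L t).
Proof.
  intros HL; induction t as [|t IH]; simpl; [now repeat constructor|].
  now apply NoDup_flat_map_cons.
Qed.

Lemma length_le_of_inj_on I P (f : I -> P) (Is : list I) (Ps : list P) :
  NoDup Is -> (forall i j, In i Is -> In j Is -> f i = f j -> i = j) ->
  (forall i, In i Is -> In (f i) Ps) -> length Is <= length Ps.
Proof.
  intros HIs Hinj Hf; rewrite <- (length_map f).
  apply NoDup_incl_length.
  - now apply NoDup_map_NoDup_ForallPairs.
  - intros p Hp; apply in_map_iff in Hp as [i [<- Hi]]; now apply Hf.
Qed.

Definition pad A (k : nat) (S : list A) : list A :=
  match S with [] => [] | z :: _ => S ++ repeat z k end.

Lemma length_pad A k (S : list A) : S <> [] -> length (pad k S) = length S + k.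
Proof.
  destruct S as [|z S]; [easy|intros _].
  simpl; now rewrite length_app, repeat_length.
Qed.

Lemma incl_pad A k (S : list A) : incl S (pad k S).
Proof. destruct S as [|z S]; [apply incl_refl|apply incl_appl, incl_refl]. Qed.

Lemma pad_incl A k (S : list A) : incl (pad k S) S.
Proof.
  destruct S as [|z S]; [apply incl_refl|].
  apply incl_app; [apply incl_refl|].
  intros y Hy; apply repeat_spec in Hy as ->; now left.
Qed.

Section FoolingSet.

Variables (X : Type) (H : hclass X) (n T : nat).

Lemma realizable_incl (S S' : sample X) :
  incl S S' -> realizable H S' -> realizable H S.
Proof.
  intros Hincl [h [Hh Hc]]; exists h; split; [exact Hh|].
  intros z Hz; now apply Hc, Hincl.
Qed.

Lemma consistent_combine_iff (h : X -> bool) (xs : list X) (bs : list bool) :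
  length bs = length xs -> consistent h (combine xs bs) <-> map h xs = bs.
Proof.
  revert bs; induction xs as [|x xs IH]; intros [|b bs] Hlen; try discriminate.
  - split; [reflexivity|intros _ z []].
  - injection Hlen as Hlen; simpl; split.
    + intros Hc; f_equal; [apply (Hc (x, b)); now left|].
      apply IH; [exact Hlen|]; intros z Hz; apply Hc; now right.
    + intros [= Hb Hbs] z [<-|Hz]; [exact Hb|].
      now apply (IH bs Hlen).
Qed.

Lemma exists_labeling (xs : list X) (bs : list bool) :
  NoDup xs -> length bs = length xs -> exists f : X -> bool, map f xs = bs.
Proof.
  intros Hxs; revert bs; induction Hxs as [|x xs Hx Hxs IH]; intros [|b bs] Hlen;
    try discriminate; [now exists (fun _ => true)|].
  injection Hlen as Hlen; destruct (IH bs Hlen) as [f Hf].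
  exists (fun y => if excluded_middle_informative (y = x) then b else f y); simpl.
  destruct excluded_middle_informative as [_|]; [|congruence].
  f_equal; rewrite <- Hf; apply map_ext_in; intros y Hy.
  destruct excluded_middle_informative as [->|]; [contradiction|reflexivity].
Qed.

Lemma shatters_realizable_combine (xs : list X) (bs : list bool) :
  shatters H xs -> length bs = length xs -> realizable H (combine xs bs).
Proof.
  intros [Hxs Hsh] Hlen; destruct (exists_labeling bs Hxs Hlen) as [f Hf].
  destruct (Hsh f) as [h [Hh Hhf]]; exists h; split; [exact Hh|].
  apply consistent_combine_iff; [exact Hlen|].
  rewrite <- Hf; now apply map_ext_in.
Qed.

Lemma not_realizable_combine_app (xs : list X) (bs bs' : list bool) :
  length bs = length xs -> length bs' = length xs -> bs <> bs' ->
  ~ realizable H (combine xs bs ++ combine xs bs').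
Proof.
  intros Hlen Hlen' Hne [h [_ Hc]]; apply Hne.
  rewrite <- (proj1 (consistent_combine_iff h xs bs Hlen)),
    <- (proj1 (consistent_combine_iff h xs bs' Hlen')); [reflexivity| |];
    intros z Hz; apply Hc, in_or_app; auto.
Qed.

Lemma np_upper_fooling_set I (Is : list I) (Sa Sb : I -> sample X) (L : sample X) :
  np_upper H n T -> NoDup Is ->
  (forall i j, In i Is -> In j Is -> length (Sa i) + length (Sb j) = n) ->
  (forall i, In i Is -> realizable H (Sa i ++ Sb i)) ->
  (forall i, In i Is -> incl (Sa i ++ Sb i) L) ->
  (forall i j, In i Is -> In j Is -> i <> j -> ~ realizable H (Sa i ++ Sb j)) ->
  length Is <= length L ^ T.
Proof.
  intros [A [B HAB]] HIs Hlen Hreal Hincl Hcross.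
  assert (Hproof : forall i, exists P, In i Is ->
            In P (words L T) /\ A (Sa i) P = true /\ B (Sb i) P = true).
  { intros i; destruct (classic (In i Is)) as [Hi|Hi]; [|now exists []].
    destruct (proj1 (HAB _ _ (Hlen i i Hi Hi)) (Hreal i Hi)) as [P [HPT [HPS HPAB]]].
    exists P; intros _; split; [|exact HPAB].
    apply in_words_iff; split; [exact HPT|].
    intros z Hz; now apply (Hincl i Hi), HPS. }
  destruct (choice _ Hproof) as [f Hf].
  rewrite <- length_words; apply (length_le_of_inj_on f); [exact HIs| |now apply Hf].
  intros i j Hi Hj Hfij; apply NNPP; intros Hne.
  destruct (Hf i Hi) as [Hwi [HA _]], (Hf j Hj) as [_ [_ HB]].
  apply in_words_iff in Hwi as [HT _].
  destruct (proj2 (HAB _ _ (Hlen i j Hi Hj)) (Hcross i j Hi Hj Hne) (f i) HT) as [F|F];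
    congruence.
Qed.

Lemma np_upper_shattered (xs : list X) :
  np_upper H n T -> shatters H xs -> xs <> [] -> 2 * length xs <= n ->
  2 ^ length xs <= (2 * length xs) ^ T.
Proof.
  intros Hnp Hsh Hxs Hn; set (m := length xs).
  assert (Hm : m <> 0) by (unfold m; now rewrite length_zero_iff_nil).
  set (Sa := fun bs : list bool => pad (n - 2 * m) (combine xs bs)).
  set (Sb := fun bs : list bool => combine xs bs).
  assert (Hbs : forall bs, In bs (words [true; false] m) -> length bs = m)
    by (intros bs Hbs; now apply in_words_iff in Hbs as [? _]).
  assert (Hcomb : forall bs : list bool, length bs = m -> length (combine xs bs) = m)
    by (intros bs Hlen; rewrite length_combine; lia).
  replace (2 ^ m) with (length (words [true; false] m)) by now rewrite length_words.
  replace (2 * m) with (length (list_prod xs [true; false]))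
    by (rewrite length_prod; simpl; lia).
  apply (np_upper_fooling_set Sa Sb Hnp).
  - apply NoDup_words; repeat constructor; simpl; intuition discriminate.
  - intros bs bs' Hi Hj; unfold Sa, Sb.
    rewrite length_pad; [rewrite !Hcomb by auto; lia|].
    rewrite <- length_zero_iff_nil, Hcomb by auto; exact Hm.
  - intros bs Hi; apply (realizable_incl (S' := combine xs bs)).
    + apply incl_app; [apply pad_incl|apply incl_refl].
    + apply shatters_realizable_combine; [exact Hsh|now apply Hbs].
  - intros bs _ [x b] Hz; apply in_prod_iff; split; [|destruct b; simpl; auto].
    apply in_app_or in Hz as [Hz|Hz]; [apply pad_incl in Hz|];
      now apply in_combine_l in Hz.
  - intros bs bs' Hi Hj Hne Hreal.
    apply (not_realizable_combine_app xs (Hbs bs Hi) (Hbs bs' Hj) Hne).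
    revert Hreal; apply realizable_incl, incl_app_app; [apply incl_pad|apply incl_refl].
Qed.

End FoolingSet.

Lemma shatters_firstn X (H : hclass X) k xs : shatters H xs -> shatters H (firstn k xs).
Proof.
  rewrite <- (firstn_skipn k xs) at 1; intros [Hnd Hsh]; split.
  - exact (NoDup_app_remove_r _ _ Hnd).
  - intros f; destruct (Hsh f) as [h [Hh Hhf]]; exists h; split; [exact Hh|].
    intros x Hx; apply Hhf, in_or_app; now left.
Qed.

Lemma VCdim_shatters_min_ext X (H : hclass X) d n :
  VCdim H d -> exists xs, shatters H xs /\ length xs = min_ext d n.
Proof.
  destruct d as [d|]; simpl.
  - intros [[xs [Hsh Hlen]] _]; exists (firstn n xs); split; [now apply shatters_firstn|].
    rewrite length_firstn; lia.
  - intros Hvc; exact (Hvc n).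
Qed.

Lemma min_ext_le d n : min_ext d n <= n.
Proof. destruct d; simpl; lia. Qed.

Open Scope R_scope.

Lemma ln_le x y : 0 < x -> x <= y -> ln x <= ln y.
Proof.
  intros Hx [Hxy|<-]; [|apply Rle_refl].
  now apply Rlt_le, ln_increasing.
Qed.

Lemma half_le_mul_ln_of_pow2_le (m T : nat) :
  (1 <= m)%nat -> (2 ^ m <= (2 * m) ^ T)%nat -> INR m / 2 <= INR T * ln (INR (2 * m)).
Proof.
  intros Hm Hpow; apply le_INR in Hpow; rewrite !pow_INR in Hpow.
  apply ln_le in Hpow; [|apply pow_lt, lt_0_INR; lia].
  rewrite !ln_pow in Hpow by (apply lt_0_INR; lia).
  replace (INR 2) with 2 in Hpow by (simpl; lra).
  assert (INR m * / 2 <= INR m * ln 2)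
    by (apply Rmult_le_compat_l; [apply pos_INR|left; exact ln_lt_2]).
  lra.
Qed.

Theorem theorem6 :
  exists (c : R) (k n0 : nat), 0 < c /\
    forall (X : Type) (H : hclass X) (d : option nat) (n T : nat),
      VCdim H d -> (n0 <= n)%nat -> np_upper H n T ->
      c * INR (min_ext d n) <= INR T * (ln (INR n)) ^ k.
Proof.
  exists (1 / 6), 1%nat, 2%nat; split; [lra|].
  intros X H d n T Hvc Hn Hnp; rewrite pow_1.
  destruct (VCdim_shatters_min_ext _ _ n Hvc) as [xs [Hsh Hlen]].
  set (ys := firstn (n / 2) xs).
  assert (Hys : length ys = Nat.min (n / 2) (min_ext d n))
    by (unfold ys; now rewrite length_firstn, Hlen).
  assert (Hmin : (min_ext d n <= 3 * length ys)%nat)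
    by (rewrite Hys; pose proof (min_ext_le d n); pose proof (Nat.div_mod_eq n 2);
        pose proof (Nat.mod_upper_bound n 2); lia).
  destruct (Nat.eq_dec (length ys) 0) as [Hys0|Hys0].
  - replace (min_ext d n) with 0%nat by lia; rewrite Rmult_0_r.
    apply Rmult_le_pos; [apply pos_INR|].
    rewrite <- ln_1; apply ln_le; [lra|apply (le_INR 1); lia].
  - assert (Hys_ne : ys <> []) by now rewrite <- length_zero_iff_nil.
    assert (H2ys : (2 * length ys <= n)%nat)
      by (rewrite Hys; pose proof (Nat.div_mod_eq n 2); lia).
    assert (Hpow := np_upper_shattered Hnp (shatters_firstn (n / 2) Hsh) Hys_ne H2ys).
    assert (Hhalf := half_le_mul_ln_of_pow2_le T (proj1 (Nat.neq_0_lt_0 _) Hys0) Hpow).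
    assert (Hln : INR T * ln (INR (2 * length ys)) <= INR T * ln (INR n)).
    { apply Rmult_le_compat_l; [apply pos_INR|].
      apply ln_le; [apply lt_0_INR; lia|now apply le_INR]. }
    apply le_INR in Hmin; rewrite mult_INR in Hmin.
    replace (INR 3) with 3 in Hmin by (simpl; lra).
    lra.
Qed.
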